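(* Let $L$ be a positive integer and let $a_1\le\dots\le a_L$ and $b_1\le\dots\le b_L$ be numbers in $[0,1]$. Define $$\Phi(t)=\sum_{l=1}^L\mathbf{1}_{[0,b_l]}(t)+\sum_{l=1}^L\mathbf{1}_{[a_l,1]}(t),\qquad A_{\ge n}=\Phi^{-1}([n,2L])\quad(1\le n\le 2L).$$ Then: (i) each set $A_{\ge n}$ is a union of at most $L$ intervals, where intervals are understood cyclically, i.e. as arcs of $[0,1]$ with $0$ and $1$ identified; (ii) if for some $n$ the set $A_{\ge n}$ cannot be written as a union of fewer than $L$ such cyclic intervals, then the sequences interlace, i.e. either $a_1\le b_1\le a_2\le b_2\le\dots\le a_L\le b_L$ or $b_1\le a_1\le b_2\le a_2\le\dots\le b_L\le a_L$. *)

From Stdlib Require Import Reals.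
Open Scope R_scope.

(* Indices are 0-based: a_1..a_L of the paper are a 0 .. a (L-1). *)

(* Phi(t) = sum_l 1_[0,b_l](t) + sum_l 1_[a_l,1](t), as a natural number.
   (For t in [0,1], 1_[0,b](t) = [t <= b] and 1_[a,1](t) = [a <= t].) *)
Fixpoint Phi (L : nat) (a b : nat -> R) (t : R) : nat :=
  match L with
  | O => O
  | S k => (Phi k a b t
            + (if Rle_dec t (b k) then 1 else 0)
            + (if Rle_dec (a k) t then 1 else 0))%nat
  end.

Definition Age (L : nat) (a b : nat -> R) (n : nat) (t : R) : Prop :=
  0 <= t <= 1 /\ (n <= Phi L a b t <= 2 * L)%nat.

Definition convex (S : R -> Prop) : Prop :=
  forall x y z, S x -> S y -> x <= z <= y -> S z.

(* A cyclic interval (arc of [0,1] with 0 and 1 identified): a subset of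
   [0,1] that is either an ordinary interval, or wraps around 0 = 1, i.e.
   is the union of an interval containing 0 and an interval containing 1. *)
Definition cyc_interval (S : R -> Prop) : Prop :=
  (forall t, S t -> 0 <= t <= 1) /\
  (convex S \/
   exists I J : R -> Prop, convex I /\ convex J /\ I 0 /\ J 1 /\
     forall t, S t <-> (I t \/ J t)).

Definition union_at_most (k : nat) (A : R -> Prop) : Prop :=
  exists I : nat -> (R -> Prop),
    (forall i, (i < k)%nat -> cyc_interval (I i)) /\
    (forall t, A t <-> exists i, (i < k)%nat /\ I i t).

Definition nondecr (L : nat) (a : nat -> R) : Prop :=
  forall i j, (i <= j < L)%nat -> a i <= a j.

Definition interlace (L : nat) (x y : nat -> R) : Prop :=
  (forall l, (l < L)%nat -> x l <= y l) /\
  (forall l, (S l < L)%nat -> y l <= x (S l)).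

From Stdlib Require Import Reals Lra Lia Classical Arith.
Open Scope R_scope.

(* Put b_{-1} = -oo and b_L = 1.  On each piece (b_{l-1}, b_l] the b-part of Phi
   is constant and the a-part is nondecreasing, so A = A_{>=n} is closed upwards
   inside each piece.  Hence every point of A lies in the maximal interval of A
   ending at some b_l, or in the arc of A through 0 = 1: A is covered by the L+1
   cyclic intervals "wrap" and run_to(b_0), ..., run_to(b_{L-1}).  A member
   run_to(b_l) is redundant unless it is "essential": b_l is in A and there are
   points outside A just above b_l and somewhere in [0, b_l]; the wrap member is
   redundant when it is empty.  Every point of A lies in an essential member, so
   each redundant member can be dropped from the cover.

   (i)  One member is always redundant: run_to(b_0) if 0 is in A; otherwise
        n > L, and either 1 is not in A (wrap is empty) or b_{L-1} = 1.
   (ii) If A needs L cyclic intervals, at most one member is redundant; then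
        b is strictly increasing, each b_l lies in A with a gap of A right
        after it, and counting Phi at the b_l and at these gap points (bounds
        Phi_lower / Phi_upper) forces n = L (b, a interlace) or n = L + 1
        (a, b interlace). *)

Lemma Phi_lower L a b x m j : (m <= L)%nat ->
  (forall k, (k < m)%nat -> a k <= x) -> (forall k, (j <= k < L)%nat -> x <= b k) ->
  (m + (L - j) <= Phi L a b x)%nat.
Proof.
  revert m; induction L as [|L IH]; intros m Hm Ha Hb; cbn [Phi]; [lia|].
  specialize (IH (Nat.min m L) ltac:(lia)
               ltac:(intros k Hk; apply Ha; lia) ltac:(intros k Hk; apply Hb; lia)).
  destruct (Rle_dec x (b L)) as [HbL|HbL]; destruct (Rle_dec (a L) x) as [HaL|HaL].
  all: try (assert (~ (j <= L)%nat) by (intro; apply HbL, Hb; lia)).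
  all: try (assert (m <> S L) by (intro; apply HaL, Ha; lia)).
  all: lia.
Qed.

Lemma Phi_upper L a b x l j :
  (forall k, (l <= k < L)%nat -> x < a k) -> (forall k, (k < j)%nat -> b k < x) ->
  (Phi L a b x <= l + (L - j))%nat.
Proof.
  revert l; induction L as [|L IH]; intros l Ha Hb; cbn [Phi]; [lia|].
  specialize (IH (Nat.min l L) ltac:(intros k Hk; apply Ha; lia)
               ltac:(intros k Hk; apply Hb; lia)).
  destruct (Rle_dec x (b L)) as [HbL|HbL]; destruct (Rle_dec (a L) x) as [HaL|HaL].
  all: try (assert (~ (L < j)%nat) by (intro; specialize (Hb L ltac:(lia)); lra)).
  all: try (assert (~ (l <= L)%nat) by (intro; specialize (Ha L ltac:(lia)); lra)).
  all: lia.
Qed.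

Lemma Phi_mono L a b t s : t <= s -> (forall j, (j < L)%nat -> t <= b j -> s <= b j) ->
  (Phi L a b t <= Phi L a b s)%nat.
Proof.
  revert t s; induction L as [|L IH]; intros t s Hts Hb; cbn [Phi]; [lia|].
  specialize (IH t s Hts ltac:(intros j Hj; apply Hb; lia)).
  specialize (Hb L (Nat.lt_succ_diag_r L)).
  destruct (Rle_dec t (b L)), (Rle_dec s (b L)), (Rle_dec (a L) t), (Rle_dec (a L) s);
    try lia; exfalso; lra.
Qed.

Lemma strict_of_steps L (b : nat -> R) : nondecr L b ->
  (forall l, (S l < L)%nat -> b l < b (S l)) -> forall k l, (k < l < L)%nat -> b k < b l.
Proof.
  intros Hb Hs k [|l] Hkl; [lia|].
  assert (b k <= b l) by (apply Hb; lia); specialize (Hs l ltac:(lia)); lra.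
Qed.

Lemma cyc_interval_ext (S1 S2 : R -> Prop) :
  (forall t, S1 t <-> S2 t) -> cyc_interval S1 -> cyc_interval S2.
Proof.
  intros E [H01 [Hc | [I [J [HI [HJ [I0 [J1 HIJ]]]]]]]];
    (split; [intros t Ht; apply H01, E, Ht|]).
  - left; intros x y z Hx Hy Hz; apply E, (Hc x y z); try apply E; auto.
  - right; exists I, J; repeat split; auto; intros Ht; [apply HIJ, E, Ht | apply E, HIJ, Ht].
Qed.

Lemma union_at_most_ext k (A B : R -> Prop) :
  (forall t, A t <-> B t) -> union_at_most k A -> union_at_most k B.
Proof. intros E [I [HI Hcov]]; exists I; split; [exact HI|]; intros t; rewrite <- E; apply Hcov. Qed.

Lemma cyc_interval_empty : cyc_interval (fun _ => False).
Proof. split; [tauto | left; intros x y z []]. Qed.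

Lemma convex_cyc (S : R -> Prop) : (forall t, S t -> 0 <= t <= 1) -> convex S -> cyc_interval S.
Proof. intros H01 Hc; split; [exact H01 | left; exact Hc]. Qed.

Definition kept_union (N : nat) (keep : nat -> Prop) (F : nat -> R -> Prop) (t : R) : Prop :=
  exists j, (j < N)%nat /\ keep j /\ F j t.

(* N selected cyclic intervals give a union of at most N of them (the
   unselected slots are filled with the empty set). *)
Lemma union_kept N keep F :
  (forall j, (j < N)%nat -> keep j -> cyc_interval (F j)) ->
  union_at_most N (kept_union N keep F).
Proof.
  intros HF; exists (fun j t => keep j /\ F j t); split.
  - intros j Hj; destruct (classic (keep j)) as [K|K].
    + apply (cyc_interval_ext (F j)); [intros t; tauto | auto].
    + apply (cyc_interval_ext (fun _ => False)); [intros t; tauto | apply cyc_interval_empty].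
  - intros t; split; intros [j Hj]; exists j; tauto.
Qed.

Definition skip (i k : nat) : nat := if (k <? i)%nat then k else S k.

Lemma skip_range i k N : (k < N)%nat -> (skip i k < S N)%nat.
Proof. unfold skip; destruct (Nat.ltb_spec k i); lia. Qed.

Lemma kept_union_skip N keep F i : (i < S N)%nat -> ~ keep i -> forall t,
  kept_union (S N) keep F t <->
  kept_union N (fun k => keep (skip i k)) (fun k => F (skip i k)) t.
Proof.
  intros Hi Ki t; unfold kept_union; split.
  - intros [j [Hj [Kj Fj]]]; destruct (lt_eq_lt_dec j i) as [[Hlt|<-]|Hgt]; [|contradiction|].
    + exists j; unfold skip; destruct (Nat.ltb_spec j i); [|lia]; split; [lia | auto].
    + exists (pred j); unfold skip; destruct (Nat.ltb_spec (pred j) i); [lia|].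
      replace (S (pred j)) with j by lia; split; [lia | auto].
  - intros [k [Hk Fk]]; exists (skip i k); split; [apply skip_range|]; auto.
Qed.

Lemma union_drop_one N keep F i :
  (forall j, (j < S N)%nat -> keep j -> cyc_interval (F j)) ->
  (i < S N)%nat -> ~ keep i -> union_at_most N (kept_union (S N) keep F).
Proof.
  intros HF Hi Ki.
  apply (union_at_most_ext N (kept_union N (fun k => keep (skip i k)) (fun k => F (skip i k)))).
  - intros t; symmetry; apply kept_union_skip; auto.
  - apply union_kept; intros k Hk; apply HF, skip_range, Hk.
Qed.

Lemma union_drop_two N keep F i i' :
  (forall j, (j < S (S N))%nat -> keep j -> cyc_interval (F j)) ->
  (i < i' < S (S N))%nat -> ~ keep i -> ~ keep i' ->
  union_at_most N (kept_union (S (S N)) keep F).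
Proof.
  intros HF Hii Ki Ki'.
  apply (union_at_most_ext N
           (kept_union (S N) (fun k => keep (skip i' k)) (fun k => F (skip i' k)))).
  - intros t; symmetry; apply kept_union_skip; [lia | auto].
  - apply (union_drop_one N _ _ i).
    + intros k Hk; apply HF, skip_range, Hk.
    + lia.
    + unfold skip; destruct (Nat.ltb_spec i i'); [auto | lia].
Qed.

Definition run_to (A : R -> Prop) (e t : R) : Prop := t <= e /\ forall s, t <= s <= e -> A s.
Definition run_from0 (A : R -> Prop) (t : R) : Prop := 0 <= t /\ forall s, 0 <= s <= t -> A s.
Definition wrap (A : R -> Prop) (t : R) : Prop := run_to A 1 t \/ run_from0 A t.

Lemma run_to_convex A e : convex (run_to A e).
Proof. intros x y z [_ Hx] [Hye _] Hz; split; [lra|]; intros s Hs; apply Hx; lra. Qed.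

Lemma run_from0_convex A : convex (run_from0 A).
Proof. intros x y z [Hx0 _] [_ Hy] Hz; split; [lra|]; intros s Hs; apply Hy; lra. Qed.

Lemma run_to_sub A e t : run_to A e t -> A t.
Proof. intros [Hte H]; apply H; lra. Qed.

Lemma wrap_sub A t : wrap A t -> A t.
Proof. intros [Ht | [Ht0 H]]; [apply (run_to_sub A 1), Ht | apply H; lra]. Qed.

(* The arc through 0 = 1 is a cyclic interval: a genuine wrap-around when 0 and
   1 both lie in A, an ordinary interval otherwise. *)
Lemma wrap_cyc A : (forall t, A t -> 0 <= t <= 1) -> cyc_interval (wrap A).
Proof.
  intros HA.
  assert (Hsub : forall t, wrap A t -> 0 <= t <= 1) by (intros t Ht; apply HA, wrap_sub, Ht).
  destruct (classic (A 0)) as [A0|A0]; [destruct (classic (A 1)) as [A1|A1]|].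
  - split; [exact Hsub|]; right; exists (run_from0 A), (run_to A 1).
    split; [apply run_from0_convex|]; split; [apply run_to_convex|].
    split; [split; [lra | intros s Hs; replace s with 0 by lra; exact A0]|].
    split; [split; [lra | intros s Hs; replace s with 1 by lra; exact A1]|].
    intros t; unfold wrap; tauto.
  - apply (cyc_interval_ext (run_from0 A)).
    + intros t; unfold wrap; split; [tauto|]; intros [[Ht H]|Ht]; [|exact Ht].
      exfalso; apply A1, H; pose proof (HA t (H t ltac:(lra))); lra.
    + apply convex_cyc; [intros t [Ht H]; apply HA, H; lra | apply run_from0_convex].
  - apply (cyc_interval_ext (run_to A 1)).
    + intros t; unfold wrap; split; [tauto|]; intros [Ht|[Ht H]]; [exact Ht|].
      exfalso; apply A0, H; lra.
    + apply convex_cyc; [intros t Ht; apply HA, (run_to_sub A 1), Ht | apply run_to_convex].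
Qed.

Section Pieces.

Variables (L : nat) (b : nat -> R) (A : R -> Prop).
Hypothesis A_unit : forall t, A t -> 0 <= t <= 1.
Hypothesis b_le1 : forall l, (l < L)%nat -> b l <= 1.
Hypothesis b_mono : nondecr L b.

Definition bnd (l : nat) : R := if (l <? L)%nat then b l else 1.

Hypothesis A_piece_upclosed : forall l t s, (l <= L)%nat ->
  (forall j, (j < l)%nat -> b j < t) -> A t -> t <= s <= bnd l -> A s.

Lemma bnd_lt l : (l < L)%nat -> bnd l = b l.
Proof. intros H; unfold bnd; destruct (Nat.ltb_spec l L); [reflexivity | lia]. Qed.

Lemma bnd_ge l : (L <= l)%nat -> bnd l = 1.
Proof. intros H; unfold bnd; destruct (Nat.ltb_spec l L); [lia | reflexivity]. Qed.

Lemma bnd_le1 l : bnd l <= 1.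
Proof.
  destruct (Nat.lt_ge_cases l L); [rewrite bnd_lt by auto; apply b_le1, H | rewrite bnd_ge by auto; lra].
Qed.

Lemma bnd_le_b l k : (l < k < L)%nat -> bnd (S l) <= b k.
Proof. intros H; rewrite bnd_lt by lia; apply b_mono; lia. Qed.

Lemma b_le_bnd l : (l < L)%nat -> b l <= bnd (S l).
Proof.
  intros H; destruct (Nat.lt_ge_cases (S l) L).
  - rewrite bnd_lt by lia; apply b_mono; lia.
  - rewrite bnd_ge by lia; apply b_le1, H.
Qed.

Definition gap_after (l : nat) : Prop := exists s, b l < s <= bnd (S l) /\ ~ A s.
Definition gap_below (l : nat) : Prop := exists u, 0 <= u <= b l /\ ~ A u.

Definition member (j : nat) : R -> Prop :=
  match j with O => wrap A | S l => run_to A (b l) end.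

Definition essential (j : nat) : Prop :=
  match j with O => A 0 \/ A 1 | S l => A (b l) /\ gap_after l /\ gap_below l end.

Lemma gap_after_strict l : (S l < L)%nat -> gap_after l -> b l < b (S l).
Proof. intros Hl [s [Hs _]]; rewrite bnd_lt in Hs by exact Hl; lra. Qed.

Lemma member_cyc j : cyc_interval (member j).
Proof.
  destruct j as [|l]; [apply wrap_cyc, A_unit|].
  apply convex_cyc; [intros t Ht; apply A_unit, (run_to_sub A (b l)), Ht | apply run_to_convex].
Qed.

Lemma in_some_piece t : A t -> exists l, (l <= L)%nat /\ run_to A (bnd l) t.
Proof.
  intros At.
  assert (Hdesc : forall d l, (L - l = d)%nat -> (l <= L)%nat -> (forall j, (j < l)%nat -> b j < t) ->
            exists l', (l' <= L)%nat /\ run_to A (bnd l') t).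
  { induction d as [|d IH]; intros l Hd Hl Hbt;
      (destruct (Rle_lt_dec t (bnd l)) as [Hle|Hlt];
       [exists l; split; [exact Hl|]; split; [exact Hle|];
        intros s Hs; apply (A_piece_upclosed l t s); auto|]).
    - rewrite bnd_ge in Hlt by lia; pose proof (A_unit t At); lra.
    - rewrite bnd_lt in Hlt by lia.
      apply (IH (S l)); [lia | lia|].
      intros j Hj; destruct (Nat.eq_dec j l) as [->|]; [exact Hlt | apply Hbt; lia]. }
  apply (Hdesc L 0%nat); [lia | lia | intros j Hj; lia].
Qed.

Lemma climb l t : (l <= L)%nat -> run_to A (bnd l) t ->
  wrap A t \/ exists j, (l <= j < L)%nat /\ essential (S j) /\ run_to A (b j) t.
Proof.
  remember (L - l)%nat as d eqn:Hd; revert l Hd.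
  induction d as [|d IH]; intros l Hd Hl Ht.
  - left; left; rewrite bnd_ge in Ht by lia; exact Ht.
  - rewrite bnd_lt in Ht by lia.
    destruct (classic (essential (S l))) as [E|E]; [right; exists l; split; [lia | auto]|].
    assert (Abl : A (b l)) by (destruct Ht as [Htb H]; apply H; lra).
    destruct (classic (gap_below l)) as [G|G].
    + assert (Hfill : forall s, b l < s <= bnd (S l) -> A s).
      { intros s Hs; apply NNPP; intro Ns; apply E; repeat split; auto; exists s; auto. }
      assert (Ht' : run_to A (bnd (S l)) t).
      { destruct Ht as [Htb H]; pose proof (b_le_bnd l ltac:(lia)).
        split; [lra|]; intros s Hs.
        destruct (Rle_lt_dec s (b l)); [apply H; lra | apply Hfill; lra]. }
      destruct (IH (S l) ltac:(lia) ltac:(lia) Ht') as [W | [j [Hj Rj]]];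
        [left; exact W | right; exists j; split; [lia | exact Rj]].
    + left; right; destruct Ht as [Htb H]; split; [apply A_unit, H; lra|].
      intros s Hs; apply NNPP; intro Ns; apply G; exists s; split; [lra | exact Ns].
Qed.

Lemma cover t : A t <-> kept_union (S L) essential member t.
Proof.
  split.
  - intros At; destruct (in_some_piece t At) as [l [Hl Ht]].
    destruct (climb l t Hl Ht) as [W | [j [Hj [E Rj]]]].
    + exists 0%nat; split; [lia|]; split; [|exact W].
      destruct W as [[H1 H]|[H0 H]]; [right; apply H; lra | left; apply H; lra].
    + exists (S j); split; [lia | split; [exact E | exact Rj]].
  - intros [[|l] [_ [_ Ht]]]; [apply wrap_sub, Ht | apply (run_to_sub A (b l)), Ht].
Qed.

Lemma union_without_one i : (i <= L)%nat -> ~ essential i -> union_at_most L A.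
Proof.
  intros Hi Ei; apply (union_at_most_ext L (kept_union (S L) essential member)).
  - intros t; symmetry; apply cover.
  - apply (union_drop_one L essential member i); [intros; apply member_cyc | lia | exact Ei].
Qed.

Lemma union_without_two i i' : (i < i' <= L)%nat -> ~ essential i -> ~ essential i' ->
  union_at_most (L - 1) A.
Proof.
  intros Hii Ei Ei'; apply (union_at_most_ext (L - 1) (kept_union (S L) essential member)).
  - intros t; symmetry; apply cover.
  - replace (S L) with (S (S (L - 1))) by lia.
    apply (union_drop_two (L - 1) essential member i i'); [intros; apply member_cyc | lia | auto | auto].
Qed.

(* If 0 is in A then all of [0, b_0] is, so run_to(b_0) is inessential. *)
Lemma first_inessential : (0 < L)%nat -> A 0 -> ~ essential 1.
Proof.
  intros HL A0 [_ [_ [u [Hu Nu]]]]; apply Nu.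
  apply (A_piece_upclosed 0 0 u); [lia | intros j Hj; lia | exact A0 | rewrite bnd_lt by exact HL; lra].
Qed.

(* If b_{L-1} = 1 there is no room for a gap after it. *)
Lemma last_inessential l : S l = L -> b l = 1 -> ~ essential (S l).
Proof. intros Hl Hb1 [_ [[s [Hs _]] _]]; rewrite bnd_ge in Hs by lia; lra. Qed.

End Pieces.

Section Superlevel.

Variables (L : nat) (a b : nat -> R) (n : nat).
Hypothesis ab_unit : forall l, (l < L)%nat -> 0 <= a l <= 1 /\ 0 <= b l <= 1.
Hypothesis a_mono : nondecr L a.
Hypothesis b_mono : nondecr L b.
Hypothesis L_pos : (0 < L)%nat.

Local Notation A := (Age L a b n).

Lemma Age_iff t : A t <-> 0 <= t <= 1 /\ (n <= Phi L a b t)%nat.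
Proof.
  pose proof (Phi_upper L a b t L 0 ltac:(intros; lia) ltac:(intros; lia)).
  unfold Age; split; intros [H01 Hn]; split; auto; lia.
Qed.

Lemma Age_unit t : A t -> 0 <= t <= 1.
Proof. intros [H _]; exact H. Qed.

Lemma Phi_in t : A t -> (n <= Phi L a b t)%nat.
Proof. intros [_ [H _]]; exact H. Qed.

Lemma Phi_out t : 0 <= t <= 1 -> ~ A t -> (Phi L a b t < n)%nat.
Proof. intros H01 Nt; apply Nat.nlt_ge; intro Hle; apply Nt, Age_iff; split; [exact H01 | lia]. Qed.

Lemma b_le1 l : (l < L)%nat -> b l <= 1.
Proof. intros Hl; apply ab_unit, Hl. Qed.

Lemma Age_piece_upclosed l t s : (l <= L)%nat -> (forall j, (j < l)%nat -> b j < t) ->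
  A t -> t <= s <= bnd L b l -> A s.
Proof.
  intros Hl Hbt At Hs; apply Age_iff in At; destruct At as [Ht01 Hnt]; apply Age_iff.
  pose proof (bnd_le1 L b b_le1 l).
  split; [lra|]; eapply Nat.le_trans; [exact Hnt|]; apply Phi_mono; [lra|].
  intros j Hj Htj; destruct (Nat.lt_ge_cases j l) as [Hjl|Hjl]; [specialize (Hbt j Hjl); lra|].
  rewrite bnd_lt in Hs by lia; assert (b l <= b j) by (apply b_mono; lia); lra.
Qed.

(* All b_l are >= 0, so Phi(0) >= L: if 0 is outside A then n > L. *)
Lemma level_above_L : ~ A 0 -> (L < n)%nat.
Proof.
  intros N0.
  pose proof (Phi_lower L a b 0 0 0 ltac:(lia) ltac:(intros; lia)
                ltac:(intros k Hk; apply ab_unit; lia)).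
  pose proof (Phi_out 0 ltac:(lra) N0); lia.
Qed.

(* Phi(1) = L + #{l | b_l = 1}, so 1 in A with n > L forces b_{L-1} = 1. *)
Lemma last_b_one : ~ A 0 -> A 1 -> b (L - 1)%nat = 1.
Proof.
  intros N0 A1; pose proof (level_above_L N0); pose proof (Phi_in 1 A1).
  assert (Hb := ab_unit (L - 1)%nat ltac:(lia)).
  destruct (Rlt_le_dec (b (L - 1)%nat) 1) as [Hlt|]; [exfalso | lra].
  pose proof (Phi_upper L a b 1 L L ltac:(intros; lia)
     ltac:(intros k Hk; assert (b k <= b (L - 1)%nat) by (apply b_mono; lia); lra)).
  lia.
Qed.

Lemma gap_point l : (l < L)%nat -> gap_after L b A l ->
  exists s, b l < s /\ (forall k, (l < k < L)%nat -> s <= b k) /\ (Phi L a b s < n)%nat.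
Proof.
  intros Hl [s [Hs Ns]]; exists s; split; [lra|]; split.
  - intros k Hk; pose proof (bnd_le_b L b b_mono l k Hk); lra.
  - pose proof (bnd_le1 L b b_le1 (S l)); pose proof (ab_unit l Hl).
    apply Phi_out; [lra | exact Ns].
Qed.

Lemma interlace_above : (L < n)%nat ->
  (forall l, (l < L)%nat -> A (b l)) ->
  (forall l, (S l < L)%nat -> gap_after L b A l) ->
  interlace L a b.
Proof.
  intros Hn Hb Hgap.
  assert (Hstrict := strict_of_steps L b b_mono (fun l Hl => gap_after_strict L b _ l Hl (Hgap l Hl))).
  split; intros l Hl; apply Rnot_lt_le; intro Hc.
  - pose proof (Phi_upper L a b (b l) l l
       ltac:(intros k Hk; assert (a l <= a k) by (apply a_mono; lia); lra)
       ltac:(intros k Hk; apply Hstrict; lia)).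
    pose proof (Phi_in _ (Hb l Hl)); lia.
  - pose proof (Phi_in _ (Hb (L - 1)%nat ltac:(lia))).
    pose proof (Phi_upper L a b (b (L - 1)%nat) L (L - 1) ltac:(intros; lia)
       ltac:(intros k Hk; apply Hstrict; lia)).
    destruct (gap_point l ltac:(lia) (Hgap l Hl)) as [s [Hs [Hsb Hsn]]].
    pose proof (Phi_lower L a b s (S (S l)) (S l) Hl
       ltac:(intros k Hk; assert (a k <= a (S l)) by (apply a_mono; lia); lra)
       ltac:(intros k Hk; apply Hsb; lia)).
    lia.
Qed.

Lemma interlace_below : (n <= L)%nat ->
  (forall l, (l < L)%nat -> A (b l)) ->
  (forall l, (l < L)%nat -> gap_after L b A l) ->
  interlace L b a.
Proof.
  intros Hn Hb Hgap.
  assert (Hstrict := strict_of_steps L b b_mono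
                       (fun l Hl => gap_after_strict L b _ l Hl (Hgap l ltac:(lia)))).
  split; intros l Hl; apply Rnot_lt_le; intro Hc.
  - destruct (gap_point l Hl (Hgap l Hl)) as [s [Hs [Hsb Hsn]]].
    pose proof (Phi_lower L a b s (S l) (S l) Hl
       ltac:(intros k Hk; assert (a k <= a l) by (apply a_mono; lia); lra)
       ltac:(intros k Hk; apply Hsb; lia)).
    lia.
  - destruct (gap_point 0 ltac:(lia) (Hgap 0%nat ltac:(lia))) as [s0 [_ [Hs0b Hs0n]]].
    pose proof (Phi_lower L a b s0 0 1 ltac:(lia) ltac:(intros; lia)
                  ltac:(intros k Hk; apply Hs0b; lia)).
    pose proof (Phi_upper L a b (b (S l)) l (S l)
       ltac:(intros k Hk; assert (a l <= a k) by (apply a_mono; lia); lra)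
       ltac:(intros k Hk; apply Hstrict; lia)).
    pose proof (Phi_in _ (Hb (S l) Hl)).
    lia.
Qed.

(* Part (i): some member of the cover of A_{>=n} is always inessential. *)
Lemma Age_union_L : union_at_most L A.
Proof.
  assert (Hdrop := union_without_one L b _ Age_unit b_le1 b_mono Age_piece_upclosed).
  destruct (classic (A 0)) as [A0|N0]; [|destruct (classic (A 1)) as [A1|N1]].
  - apply (Hdrop 1%nat); [lia | apply first_inessential; [exact Age_piece_upclosed | lia | exact A0]].
  - apply (Hdrop (S (L - 1))); [lia|].
    apply last_inessential; [lia | apply last_b_one; auto].
  - apply (Hdrop 0%nat); [lia|]; simpl; tauto.
Qed.

(* Case 0 in A of part (ii): run_to(b_0) is the inessential member; the gap
   after b_0 comes from the gap below b_1. *)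
Lemma interlace_if_0_in : (2 <= L)%nat -> A 0 ->
  (forall l, (1 <= l < L)%nat -> essential L b A (S l)) ->
  interlace L a b \/ interlace L b a.
Proof.
  intros HL2 A0 Ess.
  assert (Hini : forall u, 0 <= u <= b 0%nat -> A u).
  { intros u Hu; apply (Age_piece_upclosed 0 0 u);
      [lia | intros; lia | exact A0 | rewrite bnd_lt by lia; lra]. }
  assert (HbA : forall l, (l < L)%nat -> A (b l)).
  { intros [|l] Hl; [apply Hini; pose proof (ab_unit 0 Hl); lra | apply Ess; lia]. }
  assert (Hgap : forall l, (l < L)%nat -> gap_after L b A l).
  { intros [|l] Hl; [|apply Ess; lia].
    destruct (Ess 1%nat ltac:(lia)) as [Ab1 [_ [u [Hu Nu]]]].
    exists u; split; [|exact Nu]; rewrite bnd_lt by lia; split; [|lra].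
    apply Rnot_le_lt; intro; apply Nu, Hini; lra. }
  destruct (Nat.le_gt_cases n L); [right; apply interlace_below | left; apply interlace_above]; auto.
  intros l Hl; apply Hgap; lia.
Qed.

Lemma interlace_if_0_out : ~ A 0 ->
  (forall l, (S l < L)%nat -> essential L b A (S l)) ->
  A (b (L - 1)%nat) -> interlace L a b.
Proof.
  intros N0 Ess AbL; apply interlace_above; [apply level_above_L, N0 | |].
  - intros l Hl; destruct (Nat.eq_dec l (L - 1)) as [->|]; [exact AbL | apply Ess; lia].
  - intros l Hl; apply Ess, Hl.
Qed.

(* Part (ii): if A_{>=n} needs L cyclic intervals, at most one member is
   inessential, which forces interlacing. *)
Lemma interlace_if_tight : (2 <= L)%nat -> ~ union_at_most (L - 1) A ->
  interlace L a b \/ interlace L b a.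
Proof.
  intros HL2 Hnot.
  assert (Hone : forall i i', (i <= L)%nat -> (i' <= L)%nat -> i <> i' ->
            ~ essential L b A i -> essential L b A i').
  { intros i i' Hi Hi' Hne Ei; apply NNPP; intro Ei'; apply Hnot.
    assert (Htwo := union_without_two L b _ Age_unit b_le1 b_mono Age_piece_upclosed).
    destruct (proj1 (Nat.lt_gt_cases i i') Hne) as [Hlt|Hgt];
      [apply (Htwo i i') | apply (Htwo i' i)]; auto; lia. }
  destruct (classic (A 0)) as [A0|N0].
  - apply interlace_if_0_in; auto; intros l Hl; apply (Hone 1%nat); [lia | lia | lia |].
    apply first_inessential; [exact Age_piece_upclosed | lia | exact A0].
  - left; destruct (classic (A 1)) as [A1|N1].
    + assert (Elast := last_inessential L b A (L - 1) ltac:(lia) (last_b_one N0 A1)).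
      apply interlace_if_0_out; [exact N0 | | rewrite last_b_one; auto].
      intros l Hl; apply (Hone (S (L - 1))); [lia | lia | lia | exact Elast].
    + assert (E0 : ~ essential L b A 0) by (simpl; tauto).
      apply interlace_if_0_out; [exact N0 | intros l Hl; apply (Hone 0%nat); [lia | lia | lia | exact E0] |].
      exact (proj1 (Hone 0%nat (S (L - 1)) ltac:(lia) ltac:(lia) ltac:(lia) E0)).
Qed.

End Superlevel.

Lemma interlace_single (a b : nat -> R) : interlace 1 a b \/ interlace 1 b a.
Proof.
  destruct (Rle_dec (a 0%nat) (b 0%nat)); [left | right];
    split; intros l Hl; try lia; replace l with 0%nat by lia; lra.
Qed.

Theorem mainTheorem6 (L : nat) (a b : nat -> R) :
  (0 < L)%nat ->
  (forall l, (l < L)%nat -> 0 <= a l <= 1 /\ 0 <= b l <= 1) ->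
  nondecr L a -> nondecr L b ->
  (forall n, (1 <= n <= 2 * L)%nat -> union_at_most L (Age L a b n)) /\
  (forall n, (1 <= n <= 2 * L)%nat -> ~ union_at_most (L - 1) (Age L a b n) ->
     interlace L a b \/ interlace L b a).
Proof.
  intros HL Hab Ha Hb; split.
  - intros n _; apply Age_union_L; auto.
  - intros n _ Htight.
    destruct (Nat.eq_dec L 1) as [->|HL1]; [apply interlace_single|].
    apply (interlace_if_tight L a b n); auto; lia.
Qed.
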